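(* Let $d,m$ be positive integers with $d\mid m$. Then $P(d,n)$ divides $P(m,n)$ for every positive integer $n$.
   Context: For positive integers $m,n$, let $\mathbf{Z}_m$ be the integers modulo $m$ and $T:\mathbf{Z}_m^n\to\mathbf{Z}_m^n$, $T(a_0,\dots,a_{n-1})=(a_0+a_1,a_1+a_2,\dots,a_{n-1}+a_0)$. For $\mathbf{a}\in\mathbf{Z}_m^n$ the cycle length of $(T^k\mathbf{a})_{k\ge0}$ is the smallest positive integer $P$ such that there is $N$ with $T^{k+P}\mathbf{a}=T^k\mathbf{a}$ for all $k\ge N$. $P(m,n)$ denotes the maximum of these cycle lengths over all $\mathbf{a}\in\mathbf{Z}_m^n$. *)

From mathcomp Require Import all_boot.
Unset Printing Implicit Defensive.

(* Elements of Z_m^n are represented by their canonical representatives: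
   finite functions a : 'I_n -> nat with every entry < m. *)
Definition vec (n : nat) := {ffun 'I_n -> nat}.

Definition in_Zmn (m : nat) {n : nat} (a : vec n) : Prop := forall i : 'I_n, a i < m.

Definition Tmap (m : nat) {n : nat} (a : vec n) : vec n :=
  [ffun i : 'I_n => (a i + a (ordS i)) %% m].

Definition is_eventual_period (m n : nat) (a : vec n) (P : nat) : Prop :=
  0 < P /\ exists N, forall k, N <= k ->
    iter (k + P) (@Tmap m n) a = iter k (@Tmap m n) a.

Definition is_cycle_length (m n : nat) (a : vec n) (P : nat) : Prop :=
  is_eventual_period m n a P /\
  forall Q, is_eventual_period m n a Q -> P <= Q.

Definition is_Pmax (m n p : nat) : Prop :=
  (exists2 a : vec n, in_Zmn m a & is_cycle_length m n a p) /\
  (forall (a : vec n) q, in_Zmn m a -> is_cycle_length m n a q -> q <= p).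

From mathcomp Require Import all_boot zify.
From Stdlib Require Import Classical.
From Stdlib Require Wf_nat.

Set Implicit Arguments.
Unset Strict Implicit.

(* T is linear modulo m and commutes with cyclic rotations, so every orbit
   (T^k a)_k is a combination of rotated copies of the orbit of the unit
   vector e = (1,0,...,0); hence any eventual period of e is one of every a,
   and P(m,n) is exactly the cycle length of e.  Reduction modulo d commutes
   with T and sends e to the unit vector of Z_d^n, so P(m,n) is an eventual
   period of that vector, hence of every a in Z_d^n, and is therefore
   divisible by every cycle length there, in particular by P(d,n). *)

Lemma classic_ex_minn (P : nat -> Prop) :
  (exists n, P n) -> exists n, P n /\ forall k, P k -> n <= k.
Proof.
move=> exP.
have [n [[Pn n_min] _]] :=
  Wf_nat.dec_inh_nat_subset_has_unique_least_element P (fun k => classic (P k)) exP.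
by exists n; split=> // k /n_min/leP.
Qed.

Section EventualPeriods.

Variables (T : Type) (f : T -> T) (x : T).

Definition eventually_periodic P :=
  exists N, forall k, N <= k -> iter (k + P) f x = iter k f x.

Lemma eventually_periodic_mul t P :
  eventually_periodic P -> eventually_periodic (t * P).
Proof.
case=> N hN; exists N; elim: t => [|t IH] k le_Nk; first by rewrite addn0.
by rewrite mulSn addnCA addnC hN ?IH // (leq_trans le_Nk) ?leq_addr.
Qed.

Lemma eventually_periodic_mod P Q :
  eventually_periodic P -> eventually_periodic Q -> eventually_periodic (Q %% P).
Proof.
move=> /(eventually_periodic_mul (Q %/ P))[N1 h1] [N2 h2].
exists (maxn N1 N2) => k; rewrite geq_max => /andP[le_N1k le_N2k].
by rewrite -h1 ?(leq_trans le_N1k) ?leq_addr // -addnA [Q %% P + _]addnC -divn_eq h2.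
Qed.

Lemma least_period_dvd c Q :
  (forall R, 0 < R -> eventually_periodic R -> c <= R) ->
  0 < c -> eventually_periodic c -> eventually_periodic Q -> c %| Q.
Proof.
move=> c_min c_gt0 per_c per_Q; apply: contraT; rewrite /dvdn -lt0n => r_gt0.
have := c_min _ r_gt0 (eventually_periodic_mod per_c per_Q).
by rewrite leqNgt ltn_pmod.
Qed.

Lemma eventually_periodic_of_iter_eq i j :
  i < j -> iter i f x = iter j f x -> eventually_periodic (j - i).
Proof.
move=> lt_ij eq_ij; exists i => k le_ik.
have -> : k + (j - i) = (k - i) + j by lia.
by rewrite iterD -eq_ij -iterD subnK.
Qed.

End EventualPeriods.

Lemma eventually_periodic_finite_orbit (T : eqType) (f : T -> T) (s : seq T) x :
  (forall k, iter k f x \in s) -> exists2 P, 0 < P & eventually_periodic f x P.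
Proof.
move=> orbit_in_s.
pose orbit := [seq iter k f x | k <- iota 0 (size s).+1].
have orbit_not_uniq : ~~ uniq orbit.
  apply/negP => /uniq_leq_size le_size.
  suff : size orbit <= size s by rewrite size_map size_iota ltnn.
  by apply: le_size => _ /mapP[k _ ->].
have [i [j [lt_ij lt_j]]] := uniqPn x orbit_not_uniq.
have lt_i := ltn_trans lt_ij lt_j; rewrite size_map size_iota in lt_i lt_j.
rewrite !(nth_map 0) ?size_iota // !nth_iota // !add0n => eq_ij.
by exists (j - i); [rewrite subn_gt0 | exact: eventually_periodic_of_iter_eq].
Qed.

Fact ord_csub_subproof n (i j : 'I_n) : (i + (n - j)) %% n < n.
Proof. by rewrite ltn_pmod // (leq_ltn_trans _ (ltn_ord i)). Qed.

Definition ord_csub n (i j : 'I_n) : 'I_n := Ordinal (ord_csub_subproof i j).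

Lemma ord_csub_eq0 n (i j : 'I_n) : (val (ord_csub i j) == 0) = (i == j).
Proof.
rewrite /=; have lt_in := ltn_ord i; have lt_jn := ltn_ord j.
case: (leqP j i) => [le_ji | lt_ij].
  rewrite (_ : i + (n - j) = n + (i - j)); last by lia.
  rewrite modnDl modn_small; last by lia.
  by apply/eqP/eqP => [eq0 | ->]; [apply: val_inj => /=; lia | rewrite subnn].
rewrite modn_small; last by lia.
by apply/eqP/eqP => [eq0 | eq_ij]; [lia | rewrite eq_ij ltnn in lt_ij].
Qed.

Lemma ordS_csub n (i j : 'I_n) : ordS (ord_csub i j) = ord_csub (ordS i) j.
Proof.
by apply: val_inj => /=; rewrite -addn1 modnDml modnDml; congr (_ %% _); lia.
Qed.

Section CirculantIteration.

Variables (m n : nat).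
Hypothesis m_gt0 : 0 < m.

Local Notation T := (@Tmap m n).

(* Reduced mod m so that it lies in Z_m^n also when m = 1. *)
Definition unit_vec : vec n := [ffun i : 'I_n => (i == 0 :> nat) %% m].

Lemma unit_vec_in : in_Zmn m unit_vec.
Proof. by move=> i; rewrite ffunE ltn_pmod. Qed.

Lemma iter_Tmap_in a k : in_Zmn m a -> in_Zmn m (iter k T a).
Proof. by case: k => [|k] //= _ i; rewrite ffunE ltn_pmod. Qed.

Definition Zmn_enum : seq (vec n) :=
  codom (fun g : {ffun 'I_n -> 'I_m} => [ffun i => val (g i)] : vec n).

Lemma in_Zmn_enum a : in_Zmn m a -> a \in Zmn_enum.
Proof.
move=> a_in; apply/codomP; exists [ffun i => Ordinal (a_in i)].
by apply/ffunP => i; rewrite !ffunE.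
Qed.

Lemma exists_cycle_length a : in_Zmn m a -> exists c, is_cycle_length m n a c.
Proof.
move=> a_in; apply: classic_ex_minn.
have [P P_gt0 per_P] : exists2 P, 0 < P & eventually_periodic T a P.
  apply: (@eventually_periodic_finite_orbit _ _ Zmn_enum) => k.
  exact/in_Zmn_enum/iter_Tmap_in.
by exists P.
Qed.

Lemma iter_Tmap_conv a k i : in_Zmn m a ->
  iter k T a i = (\sum_(j < n) a j * iter k T unit_vec (ord_csub i j)) %% m.
Proof.
move=> a_in; elim: k i => [|k IH] i /=.
  rewrite (bigD1 i) //= big1 => [|j ne_ji]; last first.
    by rewrite ffunE ord_csub_eq0 eq_sym (negbTE ne_ji) mod0n muln0.
  by rewrite ffunE ord_csub_eq0 eqxx addn0 modnMmr muln1 modn_small.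
rewrite ffunE; under eq_bigr do rewrite ffunE ordS_csub.
rewrite !IH modnDm -modn_summ; under eq_bigr do rewrite modnMmr.
by rewrite modn_summ -big_split; congr (_ %% _); apply: eq_bigr => j _; rewrite mulnDr.
Qed.

Lemma eventual_period_unit_vec a P : in_Zmn m a ->
  is_eventual_period m n unit_vec P -> is_eventual_period m n a P.
Proof.
move=> a_in [P_gt0 [N per_e]]; split=> //; exists N => k le_Nk.
by apply/ffunP => i; rewrite !iter_Tmap_conv // per_e.
Qed.

End CirculantIteration.

Definition reduce d n (a : vec n) : vec n := [ffun i => a i %% d].

Section Reduction.

Variables (d m n : nat).
Hypothesis dvd_dm : d %| m.

Lemma iter_Tmap_reduce (a : vec n) k :
  iter k (@Tmap d n) (reduce d a) = reduce d (iter k (@Tmap m n) a).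
Proof.
elim: k => [|k IH] //=; rewrite IH; apply/ffunP => i.
by rewrite !ffunE modnDm modn_dvdm.
Qed.

Lemma reduce_unit_vec : reduce d (unit_vec m n) = unit_vec d n.
Proof. by apply/ffunP => i; rewrite !ffunE modn_dvdm. Qed.

Lemma eventual_period_reduce (a : vec n) P :
  is_eventual_period m n a P -> is_eventual_period d n (reduce d a) P.
Proof.
move=> [P_gt0 [N per_a]]; split=> //; exists N => k le_Nk.
by rewrite !iter_Tmap_reduce per_a.
Qed.

End Reduction.

Lemma cycle_length_dvd m n (a : vec n) c Q :
  is_cycle_length m n a c -> is_eventual_period m n a Q -> c %| Q.
Proof.
move=> [[c_gt0 per_c] c_min] [_ per_Q]; apply: least_period_dvd c_gt0 per_c per_Q.
by move=> R R_gt0 per_R; apply: c_min.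
Qed.

Lemma Pmax_dvd_unit_vec_period m n p Q : is_Pmax m n p ->
  is_eventual_period m n (unit_vec m n) Q -> p %| Q.
Proof.
move=> [[a a_in cl_a] _] per_e.
exact: cycle_length_dvd cl_a (eventual_period_unit_vec a_in per_e).
Qed.

Lemma Pmax_unit_vec_cycle_length m n p : 0 < m -> is_Pmax m n p ->
  is_cycle_length m n (unit_vec m n) p.
Proof.
move=> m_gt0 Pmax_p; have e_in : in_Zmn m (unit_vec m n) := unit_vec_in m_gt0.
have [c cl_c] := exists_cycle_length m_gt0 e_in.
have le_cp : c <= p := Pmax_p.2 _ _ e_in cl_c.
have dvd_pc : p %| c := Pmax_dvd_unit_vec_period Pmax_p cl_c.1.
have c_gt0 : 0 < c := cl_c.1.1.
have -> : p = c by apply/anti_leq; rewrite le_cp (dvdn_leq c_gt0 dvd_pc).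
exact: cl_c.
Qed.

Unset Implicit Arguments.

Theorem proposition3p1 (d m n pd pm : nat) :
  0 < d -> 0 < m -> 0 < n -> d %| m ->
  is_Pmax d n pd -> is_Pmax m n pm -> pd %| pm.
Proof.
move=> _ m_gt0 _ dvd_dm Pmax_d Pmax_m.
apply: (Pmax_dvd_unit_vec_period Pmax_d).
rewrite -(reduce_unit_vec n dvd_dm); apply: (eventual_period_reduce dvd_dm).
exact: (Pmax_unit_vec_cycle_length m_gt0 Pmax_m).1.
Qed.
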